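(* The dcpo $\mathcal Q\mathbb R_\ell$ is not core-compact in its Scott topology.
   Context: The Sorgenfrey line $\mathbb R_\ell$ is $\mathbb R$ with the topology generated by the half-open intervals $[a,b[$, $a<b$. $\mathcal Q\mathbb R_\ell$ is the set of non-empty compact subsets of $\mathbb R_\ell$ ordered by reverse inclusion; it is a dcpo. A space is core-compact if its lattice of open sets is a continuous lattice. *)

From HB Require Import structures.
From mathcomp Require Import all_boot all_order all_algebra.
From mathcomp Require Import boolp classical_sets cardinality reals.
Set Implicit Arguments. Unset Strict Implicit. Unset Printing Implicit Defensive.
Import Order.TTheory GRing.Theory Num.Theory.
Local Open Scope classical_set_scope.
Local Open Scope ring_scope.

Section Sorgenfrey.
Variable R : realType.

Definition halfopen (a b : R) : set R := [set x | a <= x /\ x < b].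

Definition sorg_open (U : set R) : Prop :=
  forall x, U x -> exists a b, a < b /\ halfopen a b x /\ halfopen a b `<=` U.

Definition sorg_compact (K : set R) : Prop :=
  forall C : set (set R), C `<=` sorg_open -> K `<=` \bigcup_(U in C) U ->
  exists D : set (set R), [/\ D `<=` C, finite_set D & K `<=` \bigcup_(U in D) U].

Definition QRl : Type := {K : set R | K !=set0 /\ sorg_compact K}.

Definition QRl_le (K L : QRl) : Prop := proj1_sig L `<=` proj1_sig K.
End Sorgenfrey.

Section Scott.
Variables (T : Type) (le : T -> T -> Prop).

Definition directed (D : set T) : Prop :=
  D !=set0 /\ forall x y, D x -> D y -> exists z, [/\ D z, le x z & le y z].

Definition is_sup (D : set T) (s : T) : Prop :=
  (forall d, D d -> le d s) /\ (forall u, (forall d, D d -> le d u) -> le s u).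

Definition upper_set (U : set T) : Prop := forall x y, U x -> le x y -> U y.

Definition scott_open (U : set T) : Prop :=
  upper_set U /\
  forall D s, directed D -> is_sup D s -> U s -> exists d, D d /\ U d.
End Scott.

(** * Core-compactness: the lattice of open sets is a continuous lattice.
    The opens, ordered by inclusion, form a complete lattice in which
    (directed) joins are unions. *)
Section CoreCompact.
Variables (T : Type) (op : set (set T)).

Definition way_below (U V : set T) : Prop :=
  forall D : set (set T), D `<=` op ->
  directed (fun A B => A `<=` B) D ->
  V `<=` \bigcup_(W in D) W -> exists W, D W /\ U `<=` W.

Definition core_compact : Prop :=
  forall V, op V -> V = \bigcup_(U in [set U | op U /\ way_below U V]) U.
End CoreCompact.

From HB Require Import structures.
From mathcomp Require Import all_boot all_order all_algebra.
From mathcomp Require Import boolp classical_sets cardinality reals.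
From mathcomp Require Import finmap lra archimedean.
Set Implicit Arguments. Unset Strict Implicit. Unset Printing Implicit Defensive.
Import Order.TTheory GRing.Theory Num.Theory.
Local Open Scope classical_set_scope.
Local Open Scope ring_scope.

(* If the Scott opens of Q R_l formed a continuous lattice, the singleton {0}
   would lie in a Scott-open U way below the whole space. Testing the
   Scott-openness of U on the chains {0} ∪ {x_m | m >= n}, where x_m > 0 tends
   to 0, whose supremum in Q R_l is their intersection {0}, shows that U
   contains compacts through every point of some ]0, b[. On the other hand the
   Scott-open sets {K | K ∩ [t, b[ = ∅}, 0 < t < b, form a directed cover of
   Q R_l, because a compact subset of R_l cannot accumulate at b from the left;
   so U lies in one of them, which no compact through t does. *)

Section Directed.
Variables (T : Type) (le : T -> T -> Prop).

Lemma total_on_directed (D : set T) :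
  (forall x, le x x) -> D !=set0 -> total_on D le -> directed le D.
Proof.
move=> le_refl D0 Dtot; split=> // x y Dx Dy.
by have [xy|yx] := Dtot x y Dx Dy; [exists y | exists x].
Qed.

Lemma directed_image (S : Type) (leS : S -> S -> Prop) (f : T -> S) (D : set T) :
  (forall x y, le x y -> leS (f x) (f y)) -> directed le D -> directed leS (f @` D).
Proof.
move=> f_mono [[x0 Dx0] Ddir]; split; first by exists (f x0), x0.
move=> _ _ [x Dx <-] [y Dy <-]; have [z [Dz xz yz]] := Ddir x y Dx Dy.
by exists (f z); split; [exists z | apply: f_mono..].
Qed.

Lemma directed_finite_ub (D F : set T) :
  (forall x y z, le x y -> le y z -> le x z) -> directed le D ->
  F `<=` D -> finite_set F -> exists2 u, D u & forall x, F x -> le x u.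
Proof.
move=> le_tr [[d Dd] Ddir] + finF.
have /finite_fsetP[X ->] : finite_set (F : set {classic T}) := finF.
elim/fset1U_rect: X => [|y X _ IH] FD; first by exists d.
have [u Du Xu] := IH (fun x Xx => FD x (fset1Ur _ Xx)).
have [v [Dv yv uv]] := Ddir y u (FD y (fset1U1 _ _)) Du.
by exists v => // x /fset1UP[->//|/Xu xu]; apply: le_tr uv.
Qed.

Lemma scott_openT : scott_open le setT.
Proof. by split=> // D s [[d Dd] _] _ _; exists d. Qed.

End Directed.

Section Sorgenfrey.
Variable R : realType.
Implicit Types (a b c t x y : R) (K V W : set R).

Lemma subset_halfopen a b a' b' :
  a' <= a -> b <= b' -> halfopen a b `<=` halfopen a' b'.
Proof.
by move=> a'a bb' y [ay yb]; split; [apply: le_trans ay | apply: lt_le_trans bb'].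
Qed.

Lemma sorg_openU V W : sorg_open V -> sorg_open W -> sorg_open (V `|` W).
Proof.
move=> oV oW x [/oV|/oW] [a [b [ab [abx abV]]]]; exists a, b; do 2 split => //.
- by move=> y /abV; left.
- by move=> y /abV; right.
Qed.

Lemma sorg_open_setC_halfopen a b : sorg_open (~` halfopen a b).
Proof.
move=> x /= nabx; have [xa|ax] := ltP x a.
  exists x, a; split=> //; split; first by split.
  by move=> y [_ ya] [ay _]; move: (le_lt_trans ay ya); rewrite ltxx.
have bx : b <= x by rewrite leNgt; apply/negP => xb; apply: nabx.
exists x, (x + 1); split; first by rewrite ltrDl.
split; first by split=> //; rewrite ltrDl.
by move=> y [xy _] [_ yb]; move: (le_lt_trans (le_trans bx xy) yb); rewrite ltxx.
Qed.

Lemma sorg_compact_directed K (C : set (set R)) :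
  sorg_compact K -> C `<=` @sorg_open R -> directed subset C ->
  K `<=` \bigcup_(W in C) W -> exists2 W, C W & K `<=` W.
Proof.
move=> cK oC dirC KC; have [D [DC finD KD]] := cK C oC KC.
have [W CW DW] := directed_finite_ub (fun A B C => @subset_trans R B A C) dirC DC finD.
by exists W => // x /KD[A DA Ax]; apply: DW DA x Ax.
Qed.

Lemma sorg_compact_gap_right_of K x :
  sorg_compact K -> ~ K x -> exists2 t, x < t & halfopen x t `<=` ~` K.
Proof.
move=> cK nKx; pose C := [set ~` halfopen x t | t in [set t | x < t]].
have oC : C `<=` @sorg_open R by move=> _ [t _ <-]; apply: sorg_open_setC_halfopen.
have dirC : directed subset C.
  apply: total_on_directed => //; first exact: subset_refl.
    by exists (~` halfopen x (x + 1)), (x + 1) => //=; lra.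
  move=> _ _ [t1 _ <-] [t2 _ <-]; rewrite !setCS.
  by have [t12|t21] := leP t1 t2; [right|left]; apply: subset_halfopen => //; apply: ltW.
have KC : K `<=` \bigcup_(W in C) W.
  move=> y Ky; have [yx|xy|yx] := ltgtP y x; last by move: Ky; rewrite yx.
    by exists (~` halfopen x (x + 1)); [exists (x + 1) => //=; lra | move=> [xy _]; lra].
  by exists (~` halfopen x y); [exists y | move=> [_]; rewrite ltxx].
have [_ [t xt <-] KxtC] := sorg_compact_directed cK oC dirC KC.
by exists t => // y xty Ky; apply: KxtC Ky xty.
Qed.

Lemma sorg_open_setC_compact K : sorg_compact K -> sorg_open (~` K).
Proof.
move=> cK x nKx; have [t xt xtK] := sorg_compact_gap_right_of cK nKx.
by exists x, t; split=> //; split=> //; split.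
Qed.

Lemma sorg_compact_gap_left_of K a c : sorg_compact K -> a < c ->
  exists t, [/\ a < t, t < c & K `<=` ~` halfopen t c].
Proof.
move=> cK ac; pose C := [set ~` halfopen t c | t in [set t | a < t /\ t < c]].
have oC : C `<=` @sorg_open R by move=> _ [t _ <-]; apply: sorg_open_setC_halfopen.
have dirC : directed subset C.
  apply: total_on_directed => //; first exact: subset_refl.
    by exists (~` halfopen ((a + c) / 2) c), ((a + c) / 2) => //=; split; lra.
  move=> _ _ [t1 _ <-] [t2 _ <-]; rewrite !setCS.
  by have [t12|t21] := leP t1 t2; [left|right]; apply: subset_halfopen => //; apply: ltW.
have KC : K `<=` \bigcup_(W in C) W.
  move=> y Ky; have [[ay yc]|ayc] := pselect (a < y /\ y < c).
    exists (~` halfopen ((y + c) / 2) c).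
      by exists ((y + c) / 2) => //=; split; lra.
    by move=> [? _]; lra.
  exists (~` halfopen ((a + c) / 2) c); first by exists ((a + c) / 2) => //=; split; lra.
  by move=> [? ?]; apply: ayc; lra.
have [_ [t [a_t t_c] <-] KtcC] := sorg_compact_directed cK oC dirC KC.
by exists t.
Qed.

Lemma sorg_compact1 x : sorg_compact [set x].
Proof.
move=> C _ xC; have [W CW Wx] := xC x erefl.
by exists [set W]; split=> [_ ->//| |_ ->]; [exact: finite_set1 | exists W].
Qed.

Lemma sorg_compactU K L : sorg_compact K -> sorg_compact L -> sorg_compact (K `|` L).
Proof.
move=> cK cL C oC KLC.
have [DK [DKC finDK KDK]] := cK C oC (fun y Ky => KLC y (or_introl Ky)).
have [DL [DLC finDL LDL]] := cL C oC (fun y Ly => KLC y (or_intror Ly)).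
exists (DK `|` DL); split; first by move=> W [/DKC|/DLC].
  by rewrite finite_setU.
by move=> y [/KDK|/LDL] [W DW Wy]; exists W => //; [left|right].
Qed.

Definition QRl1 x : QRl R :=
  exist _ [set x] (conj (ex_intro _ x erefl) (@sorg_compact1 x)).

Definition QRl_setU1 x (K : QRl R) : QRl R :=
  exist _ (x |` proj1_sig K) (conj (ex_intro _ x (or_introl erefl))
    (sorg_compactU (@sorg_compact1 x) (proj2 (proj2_sig K)))).

Definition QRl_inside V : set (QRl R) := [set K | proj1_sig K `<=` V].

Lemma QRl_directed_common_point V (D : set (QRl R)) :
  sorg_open V -> directed (@QRl_le R) D -> (forall d, D d -> ~ proj1_sig d `<=` V) ->
  exists2 p, ~ V p & forall d, D d -> proj1_sig d p.
Proof.
move=> oV dirD DV; apply: contrapT => noP.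
(* Otherwise the open sets [V `|` ~` e], [e] in [D], form a directed cover of
   [d0], so one of them contains [d0]; a member of [D] contained in both [d0]
   and that [e] then lies inside [V]. *)
have miss y : ~ V y -> exists2 e, D e & ~ proj1_sig e y.
  move=> nVy; apply: contrapT => noe; apply: noP; exists y => // e De.
  by apply: contrapT => ney; apply: noe; exists e.
have [[d0 Dd0] Ddir] := dirD.
pose C := (fun e : QRl R => V `|` ~` proj1_sig e) @` D.
have oC : C `<=` @sorg_open R.
  move=> _ [e _ <-]; apply: sorg_openU oV _.
  exact: sorg_open_setC_compact (proj2 (proj2_sig e)).
have dirC : directed subset C.
  by apply: directed_image dirD => e f ef; apply/setUS/subsetC.
have d0C : proj1_sig d0 `<=` \bigcup_(W in C) W.
  move=> y d0y; have [Vy|nVy] := pselect (V y).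
    by exists (V `|` ~` proj1_sig d0); [exists d0 | left].
  by have [e De ney] := miss y nVy; exists (V `|` ~` proj1_sig e); [exists e | right].
have [_ [e De <-] d0e] := sorg_compact_directed (proj2 (proj2_sig d0)) oC dirC d0C.
have [g [Dg d0g eg]] := Ddir d0 e Dd0 De.
apply: (DV g Dg) => y gy; have [//|] := d0e y (d0g y gy).
by move/(_ (eg y gy)).
Qed.

Lemma scott_open_QRl_inside V : sorg_open V -> scott_open (@QRl_le R) (QRl_inside V).
Proof.
move=> oV; split=> [K L KV LK | D s dirD [s_ub s_lub] sV].
  exact: subset_trans LK KV.
apply: contrapT => noD.
have DV d : D d -> ~ proj1_sig d `<=` V by move=> Dd dV; apply: noD; exists d.
have [p nVp Dp] := QRl_directed_common_point oV dirD DV.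
have : QRl_le s (QRl_setU1 p s).
  by apply: s_lub => d Dd y [->|sy]; [apply: Dp | apply: s_ub].
by move=> /(_ p (or_introl erefl)) /sV.
Qed.

Lemma archi_inv_succ_lt (e : R) :
  0 < e -> exists N, forall m, (N <= m)%N -> m.+1%:R^-1 < e.
Proof.
move=> e_gt0; exists (Num.Def.archi_bound e^-1) => m Nm.
rewrite invf_plt ?posrE ?ltr0n //.
apply: lt_le_trans (archi_boundP _) _; first by rewrite invr_ge0 ltW.
by rewrite ler_nat; apply: leq_trans Nm _.
Qed.

Lemma sorg_compact_seq x (f : nat -> R) : (forall m, x <= f m) ->
  (forall b, x < b -> exists N, forall m, (N <= m)%N -> f m < b) ->
  sorg_compact (x |` range f).
Proof.
move=> f_ge f_lim C oC xfC.
have [W0 CW0 W0x] := xfC x (or_introl erefl).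
have [a [b [ab [[ax xb] abW0]]]] := oC W0 CW0 x W0x.
have [N fNb] := f_lim b xb.
have [W CW] : {W : nat -> set R & forall m, C (W m) /\ W m (f m)}.
  apply: (@choice _ _ (fun m W => C W /\ W (f m))) => m.
  by have [Wm CWm Wmf] := xfC (f m) (or_intror (ex_intro2 _ _ m I erefl)); exists Wm.
exists (W0 |` (W @` `I_N)); split.
- by move=> _ [->|[m _ <-]] //; case: (CW m).
- by rewrite finite_setU; split; [exact: finite_set1 | apply: finite_image].
- move=> _ [->|[m _ <-]]; first by exists W0 => //; left.
  have [mN|Nm] := ltnP m N.
    by exists (W m); [right; exists m | case: (CW m)].
  exists W0; first by left.
  by apply: abW0; split; [apply: le_trans (f_ge m) | apply: fNb].
Qed.

Section ConvergentTails.
Variables (x : R) (f : nat -> R).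
Hypotheses (f_ge : forall m, x <= f m)
  (f_lim : forall b, x < b -> exists N, forall m, (N <= m)%N -> f m < b).

Lemma sorg_compact_tail n : sorg_compact (x |` range (fun m => f (n + m))).
Proof.
apply: sorg_compact_seq => // b /f_lim[N fN]; exists N => m Nm.
by apply: fN; apply: leq_trans Nm (leq_addl n m).
Qed.

Definition QRl_tail n : QRl R :=
  exist _ _ (conj (ex_intro _ x (or_introl erefl)) (sorg_compact_tail (n := n))).

Lemma QRl_tail_directed : directed (@QRl_le R) (range QRl_tail).
Proof.
apply: total_on_directed => [K||]; first exact: subset_refl.
  by exists (QRl_tail 0), 0%N.
move=> _ _ [n _ <-] [m _ <-]; wlog nm : n m / (n <= m)%N.
  by move=> wlog_nm; have [/wlog_nm|/ltnW/wlog_nm] := leqP n m; [|case]; auto.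
left=> y /= [->|[k _ <-]]; first by left.
by right; exists (m - n + k)%N => //; rewrite addnA subnKC.
Qed.

Lemma QRl_tail_sup : is_sup (@QRl_le R) (range QRl_tail) (QRl1 x).
Proof.
split=> [_ [n _ <-] y /= ->|u u_lb y uy /=]; first by left.
have : x <= y by case: (u_lb _ (ex_intro2 _ _ 0%N I erefl) y uy) => [->|[m _ <-]].
rewrite le_eqVlt => /orP[/eqP->//|xy].
have [N fN] := f_lim xy.
case: (u_lb _ (ex_intro2 _ _ N I erefl) y uy) => [//|[k _ fky]].
by move: (fN (N + k)%N (leq_addr k N)); rewrite fky ltxx.
Qed.

End ConvergentTails.

Lemma scott_open_QRl1_right U x : scott_open (@QRl_le R) U -> U (QRl1 x) ->
  exists2 b, x < b & forall y, x < y -> y < b -> exists2 K, U K & proj1_sig K y.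
Proof.
move=> [_ U_inacc] Ux; apply: contrapT => noB.
pose avoided m y :=
  [/\ x < y, y < x + m.+1%:R^-1 & forall K : QRl R, U K -> ~ proj1_sig K y].
have [f f_spec] : {f : nat -> R & forall m, avoided m (f m)}.
  apply: (@choice _ _ avoided) => m; apply: contrapT => nof; apply: noB.
  exists (x + m.+1%:R^-1); first by rewrite ltrDl invr_gt0 ltr0n.
  move=> y xy yb; apply: contrapT => noK; apply: nof; exists y; split=> // K UK Ky.
  by apply: noK; exists K.
have f_ge m : x <= f m by have [/ltW] := f_spec m.
have f_lim b : x < b -> exists N, forall m, (N <= m)%N -> f m < b.
  rewrite -subr_gt0 => /archi_inv_succ_lt[N NB]; exists N => m Nm.
  by have [_ fm _] := f_spec m; apply: lt_trans fm _; rewrite -ltrBrDl; apply: NB.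
have [_ [[n _ <-] Un]] :=
  U_inacc _ _ (QRl_tail_directed f_ge f_lim) (QRl_tail_sup f_ge f_lim) Ux.
have [_ _ no_fn] := f_spec (n + 0)%N.
by apply: (no_fn _ Un); right; exists 0%N.
Qed.

Lemma way_below_setT_QRl_inside (U : set (QRl R)) a c :
  way_below (scott_open (@QRl_le R)) U setT -> a < c ->
  exists t, [/\ a < t, t < c & U `<=` QRl_inside (~` halfopen t c)].
Proof.
move=> U_wb ac.
pose D := [set QRl_inside (~` halfopen t c) | t in [set t | a < t /\ t < c]].
have oD : D `<=` scott_open (@QRl_le R).
  by move=> _ [t _ <-]; apply/scott_open_QRl_inside/sorg_open_setC_halfopen.
have dirD : directed subset D.
  apply: total_on_directed => [V||]; first exact: subset_refl.
    exists (QRl_inside (~` halfopen ((a + c) / 2) c)), ((a + c) / 2) => //=.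
    by split; lra.
  move=> _ _ [t1 _ <-] [t2 _ <-].
  have [t12|t21] := leP t1 t2; [left|right] => K /= KV; apply: subset_trans KV _;
    by rewrite setCS; apply: subset_halfopen => //; apply: ltW.
have DT : setT `<=` \bigcup_(W in D) W.
  move=> K _; have [t [a_t t_c KV]] := sorg_compact_gap_left_of (proj2 (proj2_sig K)) ac.
  by exists (QRl_inside (~` halfopen t c)) => //; exists t.
by have [_ [[t [a_t t_c] <-] UD]] := U_wb D oD dirD DT; exists t.
Qed.

End Sorgenfrey.

Theorem proposition4p22 (R : realType) :
  ~ core_compact (scott_open (@QRl_le R)).
Proof.
move=> cc.
have [U [oU U_wb] U0] : (\bigcup_(U in [set U | scott_open (@QRl_le R) U /\
    way_below (scott_open (@QRl_le R)) U setT]) U) (QRl1 0).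
  by rewrite -cc //; apply: scott_openT.
have [b b_gt0 Ub] := scott_open_QRl1_right oU U0.
have [t [t_gt0 t_b U_inside]] := way_below_setT_QRl_inside U_wb b_gt0.
have [K UK Kt] := Ub t t_gt0 t_b.
by apply: (U_inside K UK t Kt); split.
Qed.
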